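(* In the setting described in the context, let $(S^k,M^k)_{k}$ be solutions of the finite-volume scheme as provided by the existence result (satisfying $0\le S^k_K\le1$, $0\le M^k_K<1$ and the estimate $\|Z(M^k)\|_{0,1,\mathcal{M}}+\Delta tC_1\|F(M^k)\|_{1,2,\mathcal{M}}^2\le\|Z(M^{k-1})\|_{0,1,\mathcal{M}}+\Delta tC_2$ with $C_1,C_2>0$ independent of $\Delta x,\Delta t$). For $\phi\in C_0^\infty(\Omega_T)$ set $\phi^k_K=\frac{1}{\mathrm{m}(K)}\int_K\phi(x,t_k)dx$. Then for any $\phi\in C_0^\infty(\Omega_T)$ there exist constants $C_3,C_4>0$, only depending on the data and the mesh, such that $$\sum_{k=1}^{N_T}\sum_{K\in\mathcal{T}}\mathrm{m}(K)(M^k_K-M^{k-1}_K)\phi^k_K\le C_3\|\nabla\phi\|_{L^\infty(\Omega_T)},\qquad \sum_{k=1}^{N_T}\sum_{K\in\mathcal{T}}\mathrm{m}(K)(S^k_K-S^{k-1}_K)\phi^k_K\le C_4\|\nabla\phi\|_{L^\infty(\Omega_T)}.$$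
   Context: Setting: $\Omega\subset\mathbb{R}^2$ bounded polygonal, $\Omega_T=\Omega\times(0,T)$, $\mathcal{D}$ an admissible discretization with $\mathrm{d}(x_K,\sigma)\ge\xi\mathrm{d}_\sigma$, $S^0,M^0\in L^2(\Omega)$ with $0\le S^0\le1$, $0\le M^0<1$, $0<M^D<1$ constant, $d_1,d_2>0$, $\kappa_1,\kappa_2,\kappa_3\ge0$, $\kappa_4>0$, $a\ge1$, $b\ge0$. $f(M)=M^b/(1-M)^a$, $F(M)=\int_0^Mf(s)ds$ on $[0,1)$; $g(S,M)=-\kappa_1\frac{SM}{\kappa_4+S}$, $h(S,M)=\kappa_3\frac{SM}{\kappa_4+S}-\kappa_2M$; $Z(M)=\int_{M^D}^MF(s)ds-F(M^D)(M-M^D)$. Admissible mesh (Eymard–Gallouët–Herbin): open polygonal control volumes $\mathcal{T}$ partitioning $\Omega$, edges $\mathcal{E}=\mathcal{E}_{\rm int}\cup\mathcal{E}_{\rm ext}$, points $x_K$ with $\overline{x_Kx_L}$ orthogonal to each interior edge $\sigma=K|L$; $\mathcal{E}_K$ edges of $K$. $\mathrm{d}_\sigma=\mathrm{d}(x_K,x_L)$ for $\sigma=K|L$, $\mathrm{d}(x_K,\sigma)$ for boundary edges; $\tau_\sigma=\mathrm{m}(\sigma)/\mathrm{d}_\sigma$; $\Delta t=T/N_T$, $t_k=k\Delta t$. Discrete notation: $v_{K,\sigma}=v_L$ if $\sigma=K|L$, $v_\sigma$ for boundary edges; $\mathrm{D}_{K,\sigma}v=v_{K,\sigma}-v_K$,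 $\mathrm{D}_\sigma v=|\mathrm{D}_{K,\sigma}v|$; $\|v\|_{0,p,\mathcal{M}}=(\sum_K\mathrm{m}(K)|v_K|^p)^{1/p}$, $|v|_{1,2,\mathcal{M}}^2=\sum_{\sigma}\tau_\sigma(\mathrm{D}_\sigma v)^2$, $\|v\|^2_{1,2,\mathcal{M}}=\|v\|^2_{0,2,\mathcal{M}}+|v|^2_{1,2,\mathcal{M}}$; $\Phi(M^k)$ has boundary entries $\Phi(M^D)$. Scheme: $S^0_K,M^0_K$ cell averages; $S^k_\sigma=1$, $M^k_\sigma=M^D$ on boundary edges; $\frac{\mathrm{m}(K)}{\Delta t}(S^k_K-S^{k-1}_K)-d_1\sum_{\sigma\in\mathcal{E}_K}\tau_\sigma\mathrm{D}_{K,\sigma}S^k=\mathrm{m}(K)g(S^k_K,M^k_K)$, $\frac{\mathrm{m}(K)}{\Delta t}(M^k_K-M^{k-1}_K)-d_2\sum_{\sigma\in\mathcal{E}_K}\tau_\sigma\mathrm{D}_{K,\sigma}F(M^k)=\mathrm{m}(K)h(S^k_K,M^k_K)$. *)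

From HB Require Import structures.
From mathcomp Require Import all_boot all_order all_algebra.
From mathcomp Require Import all_classical all_reals all_analysis.
Import Order.TTheory GRing.Theory Num.Theory numFieldNormedType.Exports.

Set Implicit Arguments.
Unset Strict Implicit.
Unset Printing Implicit Defensive.

Local Open Scope classical_set_scope.
Local Open Scope ring_scope.

Definition pt (R : realType) := (R * R)%type.

Definition leb2 (R : realType) :=
  ((@lebesgue_measure R) \x (@lebesgue_measure R))%E.

Definition area (R : realType) (A : set (pt R)) : R := fine (@leb2 R A).

Definition edist (R : realType) (p q : pt R) : R :=
  Num.sqrt ((p.1 - q.1) ^+ 2 + (p.2 - q.2) ^+ 2).

Definition segment (R : realType) (a b : pt R) : set (pt R) :=
  [set x | exists t : R, 0 <= t <= 1 /\
      x = (a.1 + t * (b.1 - a.1), a.2 + t * (b.2 - a.2))].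

Definition dist_to (R : realType) (x : pt R) (A : set (pt R)) : R :=
  inf [set edist x y | y in A].

(* topological boundary of an open set *)
Definition bdry (R : realType) (A : set (pt R)) : set (pt R) :=
  closure A `\` A.

(* open bounded convex polygon: bounded nonempty finite intersection of
   open half-planes {x | h.1.1 x.1 + h.1.2 x.2 < h.2} *)
Definition open_convex_polygon (R : realType) (K : set (pt R)) : Prop :=
  K !=set0 /\ bounded_set K /\
  exists s : seq ((R * R) * R),
    K = [set x | all (fun h => h.1.1 * x.1 + h.1.2 * x.2 < h.2) s].

Definition polygonal_domain (R : realType) (Omega : set (pt R)) : Prop :=
  open Omega /\ bounded_set Omega /\ Omega !=set0 /\
  exists s : seq (pt R * pt R),
    bdry Omega = \bigcup_(p in [set` s]) segment p.1 p.2.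

(* A contains no non-degenerate segment (its 1-dim measure is 0) *)
Definition no_segment_in (R : realType) (A : set (pt R)) : Prop :=
  ~ exists a b : pt R, a <> b /\ segment a b `<=` A.

Record mesh (R : realType) := Mesh {
  cell : finType;
  edge : finType;
  ctrl : cell -> set (pt R);
  ea : edge -> pt R;               (* sigma = segment [ea, eb]         *)
  eb : edge -> pt R;
  edges_of : cell -> {set edge};
  center : cell -> pt R
}.

Section MeshDefs.
Variables (R : realType) (D : mesh R).

Definition eseg (s : edge D) : set (pt R) := segment (ea s) (eb s).
Definition elen (s : edge D) : R := edist (ea s) (eb s).
Definition carea (K : cell D) : R := area (ctrl K).

Definition neighb (K : cell D) (s : edge D) : option (cell D) :=
  [pick L | (L != K) && (s \in edges_of L)].

Definition own (s : edge D) : option (cell D) :=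
  [pick K | s \in edges_of K].

Definition is_interior (s : edge D) : Prop :=
  exists K L : cell D, K != L /\ s \in edges_of K /\ s \in edges_of L.

Definition dsig (s : edge D) : R :=
  match own s with
  | Some K => match neighb K s with
              | Some L => edist (center K) (center L)
              | None => dist_to (center K) (eseg s)
              end
  | None => 0
  end.

Definition tau (s : edge D) : R := elen s / dsig s.

Definition nval (v : cell D -> R) (vb : R) (K : cell D) (s : edge D) : R :=
  match neighb K s with Some L => v L | None => vb end.

Definition DK (v : cell D -> R) (vb : R) (K : cell D) (s : edge D) : R :=
  nval v vb K s - v K.

(* D_sigma v = |D_{K,sigma} v| (independent of the side K) *)
Definition Dsig (v : cell D -> R) (vb : R) (s : edge D) : R :=
  match own s with Some K => `|DK v vb K s| | None => 0 end.

Definition norm01 (v : cell D -> R) : R := \sum_(K : cell D) carea K * `|v K|.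
Definition norm02sq (v : cell D -> R) : R := \sum_(K : cell D) carea K * v K ^+ 2.
Definition semi12sq (v : cell D -> R) (vb : R) : R :=
  \sum_(s : edge D) tau s * Dsig v vb s ^+ 2.
Definition norm12sq (v : cell D -> R) (vb : R) : R := norm02sq v + semi12sq v vb.

Definition cavg (g : pt R -> R) (K : cell D) : R :=
  Rintegral (@leb2 R) (ctrl K) g / carea K.

End MeshDefs.

(* Admissible mesh of Omega (Eymard-Gallouet-Herbin) with the regularity
   d(x_K,sigma) >= xi d_sigma. *)
Definition admissible (R : realType) (Omega : set (pt R)) (D : mesh R) (xi : R)
  : Prop :=
  polygonal_domain Omega /\
  (forall K : cell D, open_convex_polygon (ctrl K) /\ ctrl K `<=` Omega) /\
  (forall K L : cell D, K != L -> ctrl K `&` ctrl L = set0) /\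
  closure Omega = \bigcup_(K in [set: cell D]) closure (ctrl K) /\
  (forall s : edge D, ea s <> eb s) /\
  (forall s : edge D, exists K, s \in edges_of K) /\
  (forall (s : edge D) (K L L' : cell D), K != L -> K != L' -> L != L' ->
     ~ [/\ s \in edges_of K, s \in edges_of L & s \in edges_of L']) /\
  (forall K : cell D,
     bdry (ctrl K) = \bigcup_(s in [set s | s \in edges_of K]) eseg s) /\
  (forall (K : cell D) (s : edge D), s \in edges_of K ->
     (forall L, L != K -> s \notin edges_of L) -> eseg s `<=` bdry Omega) /\
  (forall (K L : cell D), K != L ->
     (exists s, s \in edges_of K /\ s \in edges_of L /\
                closure (ctrl K) `&` closure (ctrl L) = eseg s)
     \/ no_segment_in (closure (ctrl K) `&` closure (ctrl L))) /\
  (forall K : cell D, closure (ctrl K) (center K)) /\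
  (forall (K L : cell D) (s : edge D), K != L -> s \in edges_of K ->
     s \in edges_of L ->
     center K <> center L /\
     ((center L).1 - (center K).1) * ((eb s).1 - (ea s).1) +
     ((center L).2 - (center K).2) * ((eb s).2 - (ea s).2) = 0) /\
  (forall s : edge D, 0 < dsig s) /\
  0 < xi /\
  (forall (K : cell D) (s : edge D), s \in edges_of K ->
     xi * dsig s <= dist_to (center K) (eseg s)).

Definition fM (R : realType) (a b : R) (M : R) : R := M `^ b / (1 - M) `^ a.

Definition FM (R : realType) (a b : R) (M : R) : R :=
  Rintegral (@lebesgue_measure R) `[0, M] (fM a b).

Definition oint (R : realType) (u v : R) (g : R -> R) : R :=
  if u <= v then Rintegral (@lebesgue_measure R) `[u, v] g
  else - Rintegral (@lebesgue_measure R) `[v, u] g.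

Definition ZM (R : realType) (a b MD : R) (M : R) : R :=
  oint MD M (FM a b) - FM a b MD * (M - MD).

Definition gSM (R : realType) (k1 k4 : R) (S M : R) : R := - k1 * (S * M / (k4 + S)).
Definition hSM (R : realType) (k2 k3 k4 : R) (S M : R) : R :=
  k3 * (S * M / (k4 + S)) - k2 * M.

Definition scheme_solution (R : realType) (D : mesh R) (T : R) (NT : nat)
  (S0 M0 : pt R -> R) (MD d1 d2 k1 k2 k3 k4 a b : R)
  (S M : nat -> cell D -> R) : Prop :=
  let dt := T / NT%:R in
  [/\ forall K, S 0%N K = cavg S0 K,
      forall K, M 0%N K = cavg M0 K,
      forall k K, (1 <= k <= NT)%N ->
        carea K / dt * (S k K - S k.-1 K)
        - d1 * \sum_(s in edges_of K) tau s * DK (S k) 1 K s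
        = carea K * gSM k1 k4 (S k K) (M k K)
    & forall k K, (1 <= k <= NT)%N ->
        carea K / dt * (M k K - M k.-1 K)
        - d2 * \sum_(s in edges_of K) tau s *
                 DK (fun L => FM a b (M k L)) (FM a b MD) K s
        = carea K * hSM k2 k3 k4 (S k K) (M k K)].

(* space-time points ((x1,x2),t) *)
Definition spt (R : realType) := (pt R * R)%type.

Fixpoint iterD (R : realType) (vs : seq (spt R)) (phi : spt R -> R) : spt R -> R :=
  match vs with
  | [::] => phi
  | v :: vs' => 'D_v (iterD vs' phi)
  end.

(* C^infty: all iterated directional derivatives exist and are continuous *)
Definition smooth (R : realType) (phi : spt R -> R) : Prop :=
  forall vs : seq (spt R),
    continuous (iterD vs phi) /\ forall x v, derivable (iterD vs phi) x v.

Definition OmegaT (R : realType) (Omega : set (pt R)) (T : R) : set (spt R) :=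
  [set p | Omega p.1 /\ 0 < p.2 < T].

Definition test_fun (R : realType) (Omega : set (pt R)) (T : R) (phi : spt R -> R)
  : Prop :=
  smooth phi /\
  exists C : set (spt R), compact C /\ C `<=` OmegaT Omega T /\
                          forall p, ~ C p -> phi p = 0.

Definition gradx_norm (R : realType) (phi : spt R -> R) (p : spt R) : R :=
  Num.sqrt ('D_(((1 : R), (0 : R)), (0 : R)) phi p ^+ 2
          + 'D_(((0 : R), (1 : R)), (0 : R)) phi p ^+ 2).

Definition grad_Linf (R : realType) (Omega : set (pt R)) (T : R) (phi : spt R -> R)
  : R := sup [set gradx_norm phi p | p in OmegaT Omega T].

Definition phik (R : realType) (D : mesh R) (T : R) (NT : nat)
  (phi : spt R -> R) (k : nat) (K : cell D) : R :=
  cavg (fun x => phi (x, k%:R * (T / NT%:R))) K.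

From mathcomp Require Import all_boot all_order all_algebra.
From mathcomp Require Import all_classical all_reals all_analysis.
From mathcomp Require Import lra.
Import Order.TTheory GRing.Theory Num.Theory numFieldNormedType.Exports.

Set Implicit Arguments.
Unset Strict Implicit.
Unset Printing Implicit Defensive.

Local Open Scope classical_set_scope.
Local Open Scope ring_scope.

(* Each time step of the scheme, multiplied by [dt / m(K)], writes
   [m(K) (u^k_K - u^{k-1}_K)] as [dt] times a flux plus a reaction term, so both
   sums are at most [max_{k,K} |phi^k_K|] times the total variation
   [sum_k sum_K m(K) |u^k_K - u^{k-1}_K|].  Since [phi] vanishes outside [Omega],
   which lies in a ball of radius [rho], the mean value theorem in the
   [x_1]-direction gives [|phi| <= (2 rho + 1) ||grad phi||_oo].  For [S] the flux
   and the reaction are bounded because [0 <= S <= 1], so the total variation is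
   at most [N_T dt = T] times a mesh constant.  For [M] the flux is bounded through
   [|x| <= 1 + x^2] by the discrete [H^1] norm of [F(M^k)], and telescoping the
   energy estimate bounds [dt sum_k ||F(M^k)||_{1,2}^2] by
   [(||Z(M^0)||_{0,1} + T C2) / C1]. *)

Lemma normr_le1Dsqr (R : realDomainType) (x : R) : `|x| <= 1 + x ^+ 2.
Proof.
have [x_le1|x_gt1] := lerP `|x| 1; first by apply: le_trans x_le1 _; rewrite lerDl sqr_ge0.
apply: le_trans (_ : x ^+ 2 <= _); last by rewrite lerDr.
by rewrite -real_normK ?num_real // expr2 ler_peMr // ltW.
Qed.

Lemma double_sum_mul_le (R : realDomainType) (I : finType) (n : nat)
    (x y : nat -> I -> R) (B : R) :
  (forall k i, `|y k i| <= B) ->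
  \sum_(1 <= k < n.+1) \sum_i x k i * y k i
    <= B * \sum_(1 <= k < n.+1) \sum_i `|x k i|.
Proof.
move=> y_le; rewrite mulr_sumr; apply: ler_sum_nat => k _; rewrite mulr_sumr.
apply: ler_sum => i _; apply: le_trans (ler_norm _) _.
by rewrite normrM mulrC ler_wpM2r.
Qed.

Lemma implicit_step_increment (R : fieldType) (A dt x F G : R) :
  dt != 0 -> A / dt * x - F = G -> A * x = dt * (F + G).
Proof. by move=> dt_neq0 <-; rewrite addrC subrK mulrCA mulrA divfK. Qed.

Lemma telescoped_energy_le (R : realDomainType) (z N : nat -> R) (c1 c2 : R) (n : nat) :
  0 <= z n -> (forall k, (1 <= k <= n)%N -> z k + c1 * N k <= z k.-1 + c2) ->
  c1 * \sum_(1 <= k < n.+1) N k <= z 0%N + n%:R * c2.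
Proof.
move=> zn_ge0 step.
apply: le_trans (_ : \sum_(1 <= k < n.+1) (z k.-1 - z k + c2) <= _).
  rewrite mulr_sumr; apply: ler_sum_nat => k /andP[k_ge1 k_le].
  by have := step k; rewrite k_ge1 -ltnS k_le => /(_ isT); lra.
rewrite big_split /= sumr_const_nat subn1 /= mulr_natl.
rewrite (telescope_sumr_eq (fun k => - z k.-1)) //=; first lra.
by move=> k _; rewrite /= opprK addrC.
Qed.

Lemma ge0_le_integral_nonmeasurable d (T : measurableType d) (R : realType)
    (mu : {measure set T -> \bar R}) (A : set T) (f1 f2 : T -> \bar R) :
  (forall x, A x -> (0 <= f1 x)%E) -> (forall x, A x -> (f1 x <= f2 x)%E) ->
  (\int[mu]_(x in A) f1 x <= \int[mu]_(x in A) f2 x)%E.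
Proof.
move=> f1_ge0 f1_le_f2.
have f2_ge0 x : A x -> (0 <= f2 x)%E.
  by move=> Ax; exact: le_trans (f1_ge0 x Ax) (f1_le_f2 x Ax).
rewrite !ge0_integralE //; apply: ereal_sup_le => _ [h h_le <-].
by exists h => //= x; exact: le_trans (h_le x) (lee_restrict f1_le_f2 x).
Qed.

(* No measurability of [g] is needed: both parts of [g] are compared with the
   constant [c] through the supremum over simple functions. *)
Lemma normr_Rintegral_le d (T : measurableType d) (R : realType)
    (mu : {measure set T -> \bar R}) (A : set T) (g : T -> R) (c : R) :
  measurable A -> (mu A < +oo)%E -> (forall x, `|g x| <= c) ->
  `|Rintegral mu A g| <= c * fine (mu A).
Proof.
move=> mA muA_fin g_le.
have c_ge0 : 0 <= c by exact: le_trans (normr_ge0 _) (g_le point).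
have muA : mu A = (fine (mu A))%:E by rewrite fineK // ge0_fin_numE.
have part_le (h : T -> \bar R) : (forall x, 0 <= h x <= (c%:E))%E ->
    (0 <= \int[mu]_(x in A) h x <= (c * fine (mu A))%:E)%E.
  move=> h_bnd; rewrite integral_ge0 /=; last by move=> x _; case/andP: (h_bnd x).
  rewrite EFinM -muA -integral_cst //.
  by apply: ge0_le_integral_nonmeasurable => x _; case/andP: (h_bnd x).
have pos_bnd x : (0 <= funepos (EFin \o g) x <= c%:E)%E.
  by rewrite funeposE /= -EFin_max !lee_fin le_max lexx orbT ge_max c_ge0 andbT
    (le_trans (ler_norm _) (g_le x)).
have neg_bnd x : (0 <= funeneg (EFin \o g) x <= c%:E)%E.
  by rewrite funenegE /= -EFin_max !lee_fin le_max lexx orbT ge_max c_ge0 andbT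
    (le_trans _ (g_le x)) // -normrN ler_norm.
rewrite /Rintegral integralE; move: (part_le _ pos_bnd) (part_le _ neg_bnd).
case: (\int[mu]_(x in A) funepos (EFin \o g) x)%E => [p| |];
case: (\int[mu]_(x in A) funeneg (EFin \o g) x)%E => [n| |] //=;
  move=> /andP[p_ge0 p_le] /andP[n_ge0 n_le] //.
rewrite !lee_fin in p_ge0 p_le n_ge0 n_le.
by rewrite ler_norml; apply/andP; split; lra.
Qed.

Section TestFunctions.
Variable R : realType.
Implicit Types (phi : spt R -> R) (C : set (spt R)) (p v : spt R).

Local Notation e1 := (((1 : R), (0 : R)), (0 : R)).
Local Notation e2 := (((0 : R), (1 : R)), (0 : R)).

Lemma derive_eq0_outside phi C p :
  compact C -> (forall q, ~ C q -> phi q = 0) -> ~ C p -> forall v, 'D_v phi p = 0.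
Proof.
move=> C_compact phi_supp Cp v.
have C_open : open (~` C).
  by apply: closed_openC; apply: compact_closed => //; exact: norm_hausdorff.
rewrite (@near_eq_derive _ _ _ phi (cst 0)) ?derive_cst //.
near=> q; apply: phi_supp; near: q; exact: C_open.
Unshelve. all: by end_near. Qed.

Lemma derive_bounded phi C v :
  smooth phi -> compact C -> (forall q, ~ C q -> phi q = 0) ->
  exists B, forall p, `|'D_v phi p| <= B.
Proof.
move=> phi_smooth C_compact phi_supp.
have : compact ('D_v phi @` C).
  apply: continuous_compact => //; apply: continuous_subspaceT.
  exact: (phi_smooth [:: v]).1.
move/compact_bounded => [B [_ HB]]; exists (`|B| + 1) => p.
have [Cp|nCp] := pselect (C p).
  by apply: (HB (`|B| + 1)); [rewrite ltr_pwDr // ler_norm | exists p].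
by rewrite (derive_eq0_outside C_compact phi_supp nCp) normr0 addr_ge0 ?normr_ge0.
Qed.

Lemma sqrtr_sqrD_le (x y : R) : Num.sqrt (x ^+ 2 + y ^+ 2) <= `|x| + `|y|.
Proof.
rewrite -(ger0_norm (addr_ge0 (normr_ge0 x) (normr_ge0 y))) -sqrtr_sqr.
rewrite ler_sqrt ?sqr_ge0 // sqrrD !real_normK ?num_real // -addrA lerD2l lerDr.
by rewrite mulrn_wge0 // mulr_ge0.
Qed.

Lemma normr_le_sqrtr_sqrD (x y : R) : `|x| <= Num.sqrt (x ^+ 2 + y ^+ 2).
Proof. by rewrite -sqrtr_sqr ler_sqrt ?addr_ge0 ?sqr_ge0 // lerDl sqr_ge0. Qed.

Section Support.
Variables (Omega : set (pt R)) (T : R) (phi : spt R -> R).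
Hypothesis phi_test : test_fun Omega T phi.

Lemma has_sup_gradx_norm p : OmegaT Omega T p ->
  has_sup [set gradx_norm phi q | q in OmegaT Omega T].
Proof.
case: phi_test => phi_smooth [C [C_compact [_ phi_supp]]] OTp.
have [B1 HB1] := derive_bounded e1 phi_smooth C_compact phi_supp.
have [B2 HB2] := derive_bounded e2 phi_smooth C_compact phi_supp.
split; first by exists (gradx_norm phi p), p.
exists (B1 + B2) => _ [q _ <-].
by apply: le_trans (sqrtr_sqrD_le _ _) _; exact: lerD.
Qed.

Lemma grad_Linf_ge0 : 0 <= grad_Linf Omega T phi.
Proof.
have [[x [p OTp _]]|E0] := pselect ([set gradx_norm phi q | q in OmegaT Omega T] !=set0).
  apply: le_trans (sup_upper_bound (has_sup_gradx_norm OTp) _); last by exists p.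
  exact: sqrtr_ge0.
rewrite /grad_Linf (_ : [set _ | _ in _] = set0) ?sup0 //.
by apply/seteqP; split => // x Ex; apply: E0; exists x.
Qed.

Lemma partial1_le_grad_Linf p : `|'D_e1 phi p| <= grad_Linf Omega T phi.
Proof.
have [phi_smooth [C [C_compact [C_sub phi_supp]]]] := phi_test.
have [Cp|nCp] := pselect (C p); last first.
  by rewrite (derive_eq0_outside C_compact phi_supp nCp) normr0 grad_Linf_ge0.
apply: le_trans (normr_le_sqrtr_sqrD _ ('D_e2 phi p)) _.
by apply: (sup_upper_bound (has_sup_gradx_norm (C_sub p Cp))); exists p; first exact: C_sub.
Qed.

End Support.

Lemma is_derive_along (V : normedModType R) (f : V -> R) (p v : V) (s : R) :
  (forall x, derivable f x v) ->
  is_derive s 1 (fun s : R => f (p + s *: v)) ('D_v f (p + s *: v)).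
Proof.
move=> f_der.
have quotE : (fun h : R => h^-1 *: ((fun s => f (p + s *: v)) (h *: 1 + s) - f (p + s *: v)))
           = (fun h : R => h^-1 *: (f (h *: v + (p + s *: v)) - f (p + s *: v))).
  apply: funext => h; congr (_ *: (f _ - _)).
  by rewrite [h *: 1]mulr1 scalerDl addrCA addrC -addrA [s *: v + _]addrC.
split; first by rewrite /derivable /= quotE; exact: f_der.
by rewrite /derive /= quotE.
Qed.

(* phi vanishes where the x_1-coordinate exceeds rho, so the mean value theorem
   along e_1 over a segment of length at most 2 rho + 1 bounds phi by its
   partial derivative. *)
Lemma test_fun_le_grad_Linf (Omega : set (pt R)) (T rho : R) phi :
  0 <= rho -> (forall y, Omega y -> `|y| <= rho) -> test_fun Omega T phi ->
  forall p, `|phi p| <= (2 * rho + 1) * grad_Linf Omega T phi.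
Proof.
move=> rho_ge0 Omega_le phi_test p.
have G_ge0 := grad_Linf_ge0 phi_test.
have [phi_smooth [C [_ [C_sub phi_supp]]]] := phi_test.
have [Cp|nCp] := pselect (C p); last by rewrite phi_supp // normr0 mulr_ge0 //; lra.
have p11_le : `|p.1.1| <= rho.
  apply: le_trans (Omega_le _ (C_sub p Cp).1).
  by rewrite [X in _ <= X]prod_normE le_max lexx.
set L := rho + 1 - p.1.1.
have [L_gt0 L_le] : 0 < L /\ L <= 2 * rho + 1.
  by move: p11_le; rewrite ler_norml /L => /andP[]; lra.
have line_der s := is_derive_along p s ((phi_smooth [::]).2 ^~ e1).
have line_cont : {within `[0, L], continuous (fun s : R => phi (p + s *: e1))}.
  by apply: derivable_within_continuous => s _; exact: (line_der s).(ex_derive).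
have [c _] := MVT L_gt0 (fun s _ => line_der s) line_cont.
rewrite /= scale0r addr0 subr0.
have -> : phi (p + L *: e1) = 0.
  apply: phi_supp => /C_sub [/Omega_le] /=; rewrite prod_normE ge_max => /andP[+ _].
  rewrite /= -[L%:A]/(L * 1) mulr1 /L addrCA subrr addr0 ger0_norm => [*|]; lra.
rewrite sub0r => /(congr1 (fun x => `|x|)); rewrite normrN => ->.
rewrite normrM (ger0_norm (ltW L_gt0)) mulrC.
by apply: ler_pM => //; [exact: ltW | exact: partial1_le_grad_Linf].
Qed.

End TestFunctions.

Lemma halfplane_measurable (R : realType) (a1 a2 c : R) :
  measurable [set x : R * R | a1 * x.1 + a2 * x.2 < c].
Proof.
have mf : measurable_fun setT (fun x : R * R => a1 * x.1 + a2 * x.2).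
  by apply: measurable_realfun.measurable_funD; apply: measurable_realfun.measurable_funM.
have := mf measurableT `]-oo, c[%classic (measurable_itv _).
by rewrite setTI; congr measurable; apply/seteqP; split => x /=; rewrite in_itv.
Qed.

Lemma open_convex_polygon_measurable (R : realType) (K : set (pt R)) :
  open_convex_polygon K -> measurable (K : set (R * R)).
Proof.
move=> [_ [_ [s ->]]]; elim: s => [|h s IH].
  by rewrite (_ : [set _ | _] = setT) //; apply/seteqP; split.
rewrite (_ : [set _ | _] = [set x : R * R | h.1.1 * x.1 + h.1.2 * x.2 < h.2] `&`
                           [set x | all (fun h => h.1.1 * x.1 + h.1.2 * x.2 < h.2) s]).
  by apply: measurableI => //; exact: halfplane_measurable.
by apply/seteqP; split => x /= /andP.
Qed.

Section Mesh.
Variables (R : realType) (D : mesh R).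
Implicit Types (K L : cell D) (s : edge D) (v : cell D -> R).

Lemma carea_ge0 K : 0 <= carea K.
Proof. exact/fine_ge0/measure_ge0. Qed.

Lemma norm01_ge0 v : 0 <= norm01 v.
Proof. by apply: sumr_ge0 => K _; rewrite mulr_ge0 ?carea_ge0. Qed.

Lemma semi12sq_le_norm12sq v vb : semi12sq v vb <= norm12sq v vb.
Proof.
by rewrite /norm12sq lerDr; apply: sumr_ge0 => K _; rewrite mulr_ge0 ?carea_ge0 ?sqr_ge0.
Qed.

(* A cell of infinite area has [carea K = 0], and then [cavg g K = 0]. *)
Lemma cavg_bound K (g : pt R -> R) (c : R) :
  measurable (ctrl K) -> (forall x, `|g x| <= c) -> `|cavg g K| <= c.
Proof.
move=> K_meas g_le; rewrite /cavg; have [->|area_neq0] := eqVneq (carea K) 0.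
  by rewrite invr0 mulr0 normr0 (le_trans (normr_ge0 _) (g_le point)).
have area_gt0 : 0 < carea K by rewrite lt_def area_neq0 carea_ge0.
rewrite normrM normfV (gtr0_norm area_gt0) ler_pdivrMr //.
have area_fin : (@leb2 R (ctrl K) < +oo)%E.
  move: area_neq0; rewrite /carea /area.
  by case: (@leb2 R (ctrl K)) => //= [r _|]; rewrite ?ltry // eqxx.
exact: normr_Rintegral_le.
Qed.

Lemma normDK_le1 v vb K s :
  (forall L, 0 <= v L <= 1) -> 0 <= vb <= 1 -> `|DK v vb K s| <= 1.
Proof.
move=> v01 vb01; rewrite /DK /nval.
case: (neighb K s) => [L|]; move: (v01 K) => /andP[? ?].
  by move: (v01 L) => /andP[? ?]; rewrite ler_norml; apply/andP; split; lra.
by move: vb01 => /andP[? ?]; rewrite ler_norml; apply/andP; split; lra.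
Qed.

End Mesh.

Section AdmissibleMesh.
Variables (R : realType) (Omega : set (pt R)) (D : mesh R) (xi : R).
Hypothesis adm : admissible Omega D xi.
Implicit Types (K L : cell D) (s : edge D) (v : cell D -> R).

Lemma admissible_domain_bounded :
  exists2 rho : R, 0 <= rho & forall y, Omega y -> `|y| <= rho.
Proof.
have [[_ [[B [_ HB]] _]] _] := adm.
exists (`|B| + 1) => [|y Oy]; first by rewrite addr_ge0.
by apply: (HB (`|B| + 1)) => //; rewrite ltr_pwDr // ler_norm.
Qed.

Lemma cell_measurable K : measurable (ctrl K).
Proof.
have [_ [cells _]] := adm.
exact: open_convex_polygon_measurable (cells K).1.
Qed.

Lemma tau_ge0 s : 0 <= tau s.
Proof.
have [_ [_ [_ [_ [_ [_ [_ [_ [_ [_ [_ [_ [dsig_gt0 _]]]]]]]]]]]]] := adm.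
by rewrite /tau divr_ge0 ?sqrtr_ge0 // ltW.
Qed.

Lemma neighb_eq K L s :
  L != K -> s \in edges_of K -> s \in edges_of L -> neighb K s = Some L.
Proof.
have [_ [_ [_ [_ [_ [_ [at_most_two _]]]]]]] := adm.
move=> LK sK sL; rewrite /neighb; case: pickP => [L' /andP[L'K sL']|none].
  case: (eqVneq L' L) => [->//|L'L]; exfalso.
  have KL : K != L by rewrite eq_sym.
  have KL' : K != L' by rewrite eq_sym.
  exact: (at_most_two s K L' L KL' KL L'L (And3 sK sL' sL)).
by have := none L; rewrite LK sL.
Qed.

Lemma Dsig_normDK v vb K s : s \in edges_of K -> Dsig v vb s = `|DK v vb K s|.
Proof.
move=> sK; rewrite /Dsig /own; case: pickP => [K' sK'|none]; last first.
  by have := none K; rewrite sK.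
case: (eqVneq K' K) => [->//|K'K].
rewrite /DK /nval (neighb_eq K'K sK sK') (neighb_eq _ sK' sK) 1?eq_sym //.
by rewrite distrC.
Qed.

Lemma normr_flux_le v vb K :
  `|\sum_(s in edges_of K) tau s * DK v vb K s| <= \sum_(s : edge D) tau s + semi12sq v vb.
Proof.
apply: le_trans (ler_norm_sum _ _ _) _.
apply: (@le_trans _ _ (\sum_(s in edges_of K) tau s * (1 + Dsig v vb s ^+ 2))).
  apply: ler_sum => s sK; rewrite normrM ger0_norm ?tau_ge0 // ler_wpM2l ?tau_ge0 //.
  by rewrite (Dsig_normDK _ _ sK) real_normK ?num_real // normr_le1Dsqr.
rewrite /semi12sq -big_split /= big_mkcond /=; apply: ler_sum => s _.
case: ifP => _; first by rewrite mulrDr mulr1.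
by rewrite addr_ge0 ?tau_ge0 // mulr_ge0 ?tau_ge0 ?sqr_ge0.
Qed.

Lemma normr_flux01_le v vb K :
  (forall L, 0 <= v L <= 1) -> 0 <= vb <= 1 ->
  `|\sum_(s in edges_of K) tau s * DK v vb K s| <= \sum_(s : edge D) tau s.
Proof.
move=> v01 vb01; apply: le_trans (ler_norm_sum _ _ _) _.
apply: le_trans (_ : \sum_(s in edges_of K) tau s <= _).
  apply: ler_sum => s _; rewrite normrM ger0_norm ?tau_ge0 // ler_piMr ?tau_ge0 //.
  exact: normDK_le1.
rewrite [X in _ <= X](bigID (mem (edges_of K))) /= lerDl.
by apply: sumr_ge0 => s _; exact: tau_ge0.
Qed.

End AdmissibleMesh.

Section Reactions.
Variables (R : realType) (k1 k2 k3 k4 S M : R).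
Hypotheses (k1_ge0 : 0 <= k1) (k2_ge0 : 0 <= k2) (k3_ge0 : 0 <= k3) (k4_gt0 : 0 < k4).
Hypotheses (S01 : 0 <= S <= 1) (M01 : 0 <= M < 1).

Lemma normr_monod_le1 : `|S * M / (k4 + S)| <= 1.
Proof.
case/andP: S01 => S_ge0 S_le1; case/andP: M01 => M_ge0 M_lt1.
have kS_gt0 : 0 < k4 + S by rewrite ltr_wpDr.
rewrite ger0_norm; last by rewrite divr_ge0 ?mulr_ge0 // ltW.
rewrite ler_pdivrMr // mul1r.
by apply: le_trans (_ : S <= _); [rewrite ler_piMr // ltW | rewrite lerDr ltW].
Qed.

Lemma normr_gSM_le : `|gSM k1 k4 S M| <= k1.
Proof. by rewrite /gSM normrM normrN (ger0_norm k1_ge0) ler_piMr // normr_monod_le1. Qed.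

Lemma normr_hSM_le : `|hSM k2 k3 k4 S M| <= k3 + k2.
Proof.
rewrite /hSM; apply: le_trans (ler_normB _ _) _.
case/andP: M01 => M_ge0 M_lt1.
rewrite (normrM k3) (normrM k2) (ger0_norm k3_ge0) (ger0_norm k2_ge0) (ger0_norm M_ge0).
apply: lerD; first by rewrite ler_piMr // normr_monod_le1.
by rewrite ler_piMr // ltW.
Qed.

End Reactions.

Section SchemeSolution.
Variables (R : realType) (Omega : set (pt R)) (D : mesh R) (xi T : R) (NT : nat).
Variables (S0 M0 : pt R -> R) (MD d1 d2 k1 k2 k3 k4 a b C1 C2 : R).
Variables (S M : nat -> cell D -> R).
Hypotheses (adm : admissible Omega D xi) (T_gt0 : 0 < T) (NT_gt0 : (0 < NT)%N).
Hypotheses (d1_ge0 : 0 <= d1) (d2_ge0 : 0 <= d2).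
Hypotheses (k1_ge0 : 0 <= k1) (k2_ge0 : 0 <= k2) (k3_ge0 : 0 <= k3) (k4_gt0 : 0 < k4).
Hypothesis sol : scheme_solution T NT S0 M0 MD d1 d2 k1 k2 k3 k4 a b S M.
Hypothesis SM_bounds :
  forall k K, (1 <= k <= NT)%N -> 0 <= S k K <= 1 /\ 0 <= M k K < 1.

Let dt := T / NT%:R.
Let Nc : R := #|{: cell D}|%:R.
Let Tau := \sum_(s : edge D) tau s.
Let Ar := \sum_(K : cell D) carea K.

Let dt_gt0 : 0 < dt. Proof. by rewrite divr_gt0 ?ltr0n. Qed.

Let NT_dt : NT%:R * dt = T.
Proof. by rewrite /dt mulrC divfK // pnatr_eq0 -lt0n. Qed.

Lemma S_step_le k : (1 <= k <= NT)%N ->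
  \sum_(K : cell D) `|carea K * (S k K - S k.-1 K)| <= dt * (d1 * (Nc * Tau) + k1 * Ar).
Proof.
move=> k_in; have [_ _ S_eq _] := sol.
have S01 L : 0 <= S k L <= 1 by have [] := SM_bounds L k_in.
apply: le_trans (_ : \sum_(K : cell D) dt * (d1 * Tau + k1 * carea K) <= _).
  apply: ler_sum => K _; have [SK MK] := SM_bounds K k_in.
  rewrite (implicit_step_increment _ (S_eq k K k_in)) ?gt_eqF //.
  rewrite normrM gtr0_norm // ler_wpM2l ?(ltW dt_gt0) //.
  apply: le_trans (ler_normD _ _) _.
  rewrite (normrM d1) (normrM (carea K)) (ger0_norm d1_ge0) (ger0_norm (carea_ge0 K)).
  apply: lerD; first by rewrite ler_wpM2l // (normr_flux01_le adm) // lexx ler01.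
  by rewrite mulrC ler_wpM2r ?carea_ge0 // normr_gSM_le.
rewrite -mulr_sumr big_split /= sumr_const -mulr_sumr -mulr_natl.
by rewrite mulrCA.
Qed.

Lemma M_step_le k : (1 <= k <= NT)%N ->
  \sum_(K : cell D) `|carea K * (M k K - M k.-1 K)|
    <= dt * (d2 * (Nc * (Tau + norm12sq (fun K => FM a b (M k K)) (FM a b MD)))
             + (k3 + k2) * Ar).
Proof.
move=> k_in; have [_ _ _ M_eq] := sol.
set Nk := norm12sq _ _.
apply: le_trans (_ : \sum_(K : cell D) dt * (d2 * (Tau + Nk) + (k3 + k2) * carea K) <= _).
  apply: ler_sum => K _; have [SK MK] := SM_bounds K k_in.
  rewrite (implicit_step_increment _ (M_eq k K k_in)) ?gt_eqF //.
  rewrite normrM gtr0_norm // ler_wpM2l ?(ltW dt_gt0) //.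
  apply: le_trans (ler_normD _ _) _.
  rewrite (normrM d2) (normrM (carea K)) (ger0_norm d2_ge0) (ger0_norm (carea_ge0 K)).
  apply: lerD.
    rewrite ler_wpM2l //; apply: le_trans (normr_flux_le adm _ _ K) _.
    by rewrite lerD2l semi12sq_le_norm12sq.
  by rewrite mulrC ler_wpM2r ?carea_ge0 // normr_hSM_le.
rewrite -mulr_sumr big_split /= sumr_const -mulr_sumr -mulr_natl.
by rewrite mulrCA.
Qed.

Lemma S_total_variation_le :
  \sum_(1 <= k < NT.+1) \sum_(K : cell D) `|carea K * (S k K - S k.-1 K)|
    <= T * (d1 * (Nc * Tau) + k1 * Ar).
Proof.
apply: le_trans (_ : \sum_(1 <= k < NT.+1) dt * (d1 * (Nc * Tau) + k1 * Ar) <= _).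
  by apply: ler_sum_nat => k /andP[k_ge1 k_lt]; apply: S_step_le; rewrite k_ge1 -ltnS.
by rewrite sumr_const_nat subn1 /= -mulr_natl mulrA NT_dt.
Qed.

Hypothesis C1_gt0 : 0 < C1.
Hypothesis energy : forall k, (1 <= k <= NT)%N ->
  norm01 (fun K => ZM a b MD (M k K))
  + T / NT%:R * C1 * norm12sq (fun K => FM a b (M k K)) (FM a b MD)
  <= norm01 (fun K => ZM a b MD (M k.-1 K)) + T / NT%:R * C2.

Lemma M_total_variation_le :
  \sum_(1 <= k < NT.+1) \sum_(K : cell D) `|carea K * (M k K - M k.-1 K)|
    <= T * (d2 * (Nc * Tau) + (k3 + k2) * Ar)
       + d2 * (Nc * ((norm01 (fun K : cell D => ZM a b MD (cavg M0 K)) + T * C2) / C1)).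
Proof.
have [_ M_init _ _] := sol.
set Nk := fun k => norm12sq (fun K => FM a b (M k K)) (FM a b MD).
set Q := (_ + _) / C1.
have energy_sum : dt * \sum_(1 <= k < NT.+1) Nk k <= Q.
  rewrite ler_pdivlMr // mulrAC.
  have := telescoped_energy_le (norm01_ge0 _) energy.
  have M0_eq : (fun K => ZM a b MD (M 0%N K)) = (fun K => ZM a b MD (cavg M0 K)).
    by apply: funext => K; rewrite M_init.
  by rewrite M0_eq -/dt mulrA NT_dt; apply.
apply: le_trans (_ : \sum_(1 <= k < NT.+1)
    (dt * (d2 * (Nc * Tau) + (k3 + k2) * Ar) + d2 * Nc * (dt * Nk k)) <= _).
  apply: ler_sum_nat => k /andP[k_ge1 k_lt].
  apply: le_trans (M_step_le _) _; first by rewrite k_ge1 -ltnS.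
  rewrite /Nk; lra.
rewrite big_split /= sumr_const_nat subn1 /= -mulr_natl mulrA NT_dt lerD2l.
rewrite -!mulr_sumr -mulrA ler_wpM2l // ler_wpM2l //.
Qed.

End SchemeSolution.

Lemma S_total_variation_bounded (R : realType) (Omega : set (pt R)) (D : mesh R)
    (xi T : R) (S0 M0 : pt R -> R) (MD d1 d2 k1 k2 k3 k4 a b : R) :
  admissible Omega D xi -> 0 < T -> 0 <= d1 -> 0 <= k1 -> 0 < k4 ->
  exists2 CS : R, 0 <= CS & forall (NT : nat) (S M : nat -> cell D -> R),
    (0 < NT)%N -> scheme_solution T NT S0 M0 MD d1 d2 k1 k2 k3 k4 a b S M ->
    (forall k K, (1 <= k <= NT)%N -> 0 <= S k K <= 1 /\ 0 <= M k K < 1) ->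
    \sum_(1 <= k < NT.+1) \sum_(K : cell D) `|carea K * (S k K - S k.-1 K)| <= CS.
Proof.
move=> adm T_gt0 d1_ge0 k1_ge0 k4_gt0.
set Nc : R := #|{: cell D}|%:R; set Tau := \sum_(s : edge D) tau s.
set Ar := \sum_(K : cell D) carea K.
have Nc_ge0 : 0 <= Nc by exact: ler0n.
have Tau_ge0 : 0 <= Tau by apply: sumr_ge0 => s _; exact: tau_ge0 adm s.
have Ar_ge0 : 0 <= Ar by apply: sumr_ge0 => K _; exact: carea_ge0.
exists (T * (d1 * (Nc * Tau) + k1 * Ar)).
  by rewrite mulr_ge0 ?addr_ge0 ?mulr_ge0 ?(ltW T_gt0).
move=> NT S M NT_gt0 sol SM_bounds.
exact: S_total_variation_le adm T_gt0 NT_gt0 d1_ge0 k1_ge0 k4_gt0 sol SM_bounds.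
Qed.

Lemma M_total_variation_bounded (R : realType) (Omega : set (pt R)) (D : mesh R)
    (xi T : R) (S0 M0 : pt R -> R) (MD d1 d2 k1 k2 k3 k4 a b C1 C2 : R) :
  admissible Omega D xi -> 0 < T -> 0 <= d2 -> 0 <= k2 -> 0 <= k3 -> 0 < k4 ->
  0 < C1 -> 0 <= C2 ->
  exists2 CM : R, 0 <= CM & forall (NT : nat) (S M : nat -> cell D -> R),
    (0 < NT)%N -> scheme_solution T NT S0 M0 MD d1 d2 k1 k2 k3 k4 a b S M ->
    (forall k K, (1 <= k <= NT)%N -> 0 <= S k K <= 1 /\ 0 <= M k K < 1) ->
    (forall k, (1 <= k <= NT)%N ->
       norm01 (fun K => ZM a b MD (M k K))
       + T / NT%:R * C1 * norm12sq (fun K => FM a b (M k K)) (FM a b MD)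
       <= norm01 (fun K => ZM a b MD (M k.-1 K)) + T / NT%:R * C2) ->
    \sum_(1 <= k < NT.+1) \sum_(K : cell D) `|carea K * (M k K - M k.-1 K)| <= CM.
Proof.
move=> adm T_gt0 d2_ge0 k2_ge0 k3_ge0 k4_gt0 C1_gt0 C2_ge0.
set Nc : R := #|{: cell D}|%:R; set Tau := \sum_(s : edge D) tau s.
set Ar := \sum_(K : cell D) carea K.
set Q := (norm01 (fun K : cell D => ZM a b MD (cavg M0 K)) + T * C2) / C1.
have Nc_ge0 : 0 <= Nc by exact: ler0n.
have Tau_ge0 : 0 <= Tau by apply: sumr_ge0 => s _; exact: tau_ge0 adm s.
have Ar_ge0 : 0 <= Ar by apply: sumr_ge0 => K _; exact: carea_ge0.
have Q_ge0 : 0 <= Q.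
  by rewrite divr_ge0 ?addr_ge0 ?norm01_ge0 ?mulr_ge0 // ltW.
exists (T * (d2 * (Nc * Tau) + (k3 + k2) * Ar) + d2 * (Nc * Q)).
  apply: addr_ge0; apply: mulr_ge0; rewrite ?(ltW T_gt0) //.
    exact: addr_ge0 (mulr_ge0 d2_ge0 (mulr_ge0 Nc_ge0 Tau_ge0))
                    (mulr_ge0 (addr_ge0 k3_ge0 k2_ge0) Ar_ge0).
  exact: mulr_ge0 Nc_ge0 Q_ge0.
move=> NT S M NT_gt0 sol SM_bounds energy.
exact: M_total_variation_le adm T_gt0 NT_gt0 d2_ge0 k2_ge0 k3_ge0 k4_gt0 sol SM_bounds
  C1_gt0 energy.
Qed.

Theorem lemma5p2 (R : realType) (Omega : set (pt R)) (D : mesh R) (xi T : R)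
  (S0 M0 : pt R -> R) (MD d1 d2 k1 k2 k3 k4 a b C1 C2 : R) :
  admissible Omega D xi ->
  0 < T ->
  (* initial data in L^2(Omega), 0 <= S^0 <= 1, 0 <= M^0 < 1 *)
  measurable_fun Omega S0 -> measurable_fun Omega M0 ->
  (@leb2 R).-integrable Omega (fun x => (S0 x ^+ 2)%:E) ->
  (@leb2 R).-integrable Omega (fun x => (M0 x ^+ 2)%:E) ->
  {ae @leb2 R, forall x, Omega x -> 0 <= S0 x <= 1} ->
  {ae @leb2 R, forall x, Omega x -> 0 <= M0 x < 1} ->
  0 < MD < 1 -> 0 < d1 -> 0 < d2 ->
  0 <= k1 -> 0 <= k2 -> 0 <= k3 -> 0 < k4 -> 1 <= a -> 0 <= b ->
  0 < C1 -> 0 < C2 ->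
  exists C3 C4 : R, 0 < C3 /\ 0 < C4 /\
  forall (NT : nat) (S M : nat -> cell D -> R),
    (0 < NT)%N ->
    @scheme_solution R D T NT S0 M0 MD d1 d2 k1 k2 k3 k4 a b S M ->
    (forall k K, (1 <= k <= NT)%N -> 0 <= S k K <= 1 /\ 0 <= M k K < 1) ->
    (forall k, (1 <= k <= NT)%N ->
       norm01 (fun K => ZM a b MD (M k K))
       + T / NT%:R * C1 * norm12sq (fun K => FM a b (M k K)) (FM a b MD)
       <= norm01 (fun K => ZM a b MD (M k.-1 K)) + T / NT%:R * C2) ->
    forall phi : spt R -> R, test_fun Omega T phi ->
      \sum_(1 <= k < NT.+1) \sum_(K : cell D)
          carea K * (M k K - M k.-1 K) * @phik R D T NT phi k K
        <= C3 * grad_Linf Omega T phi /\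
      \sum_(1 <= k < NT.+1) \sum_(K : cell D)
          carea K * (S k K - S k.-1 K) * @phik R D T NT phi k K
        <= C4 * grad_Linf Omega T phi.
Proof.
move=> adm T_gt0 _ _ _ _ _ _ _ d1_gt0 d2_gt0 k1_ge0 k2_ge0 k3_ge0 k4_gt0 _ _ C1_gt0 C2_gt0.
have [rho rho_ge0 Omega_le] := admissible_domain_bounded adm.
have [CM CM_ge0 M_tv] := M_total_variation_bounded S0 M0 MD d1 k1 a b adm T_gt0
  (ltW d2_gt0) k2_ge0 k3_ge0 k4_gt0 C1_gt0 (ltW C2_gt0).
have [CS CS_ge0 S_tv] := S_total_variation_bounded S0 M0 MD d2 k2 k3 a b adm T_gt0
  (ltW d1_gt0) k1_ge0 k4_gt0.
set P := 2 * rho + 1; have P_ge0 : 0 <= P by rewrite /P; lra.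
exists (P * CM + 1), (P * CS + 1).
do 2 (split; first by rewrite ltr_pwDr ?mulr_ge0).
move=> NT S M NT_gt0 sol SM_bounds energy phi phi_test.
set G := grad_Linf Omega T phi; have G_ge0 : 0 <= G := grad_Linf_ge0 phi_test.
have phik_le k (K : cell D) : `|phik T NT phi k K| <= P * G.
  apply: cavg_bound (cell_measurable adm K) _ => x.
  exact: test_fun_le_grad_Linf rho_ge0 Omega_le phi_test _.
have scale_le V C : V <= C -> P * G * V <= (P * C + 1) * G.
  move=> V_le; rewrite [X in _ <= X]mulrDl mul1r [P * C * G]mulrAC.
  by apply: ler_wpDr => //; rewrite ler_wpM2l ?mulr_ge0.
split.
- apply: le_trans
    (double_sum_mul_le NT (fun k K => carea K * (M k K - M k.-1 K)) phik_le) _.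
  exact/scale_le/(M_tv _ _ _ NT_gt0 sol SM_bounds energy).
- apply: le_trans
    (double_sum_mul_le NT (fun k K => carea K * (S k K - S k.-1 K)) phik_le) _.
  exact/scale_le/(S_tv _ _ _ NT_gt0 sol SM_bounds).
Qed.
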